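(* Let $m>1$ be an odd integer. If $\mathbf{u}_1,\mathbf{u}_2$ are units of $H_{1,2,2}$ with $\mathbf{u}_1-\mathbf{u}_2\in mH_{1,2,2}$, then $\mathbf{u}_1=\mathbf{u}_2$.
   Context: Let $\mathbf{i},\mathbf{j},\mathbf{k}$ be the standard quaternion units. $H_{1,2,2}$ is the subring of the quaternions equal to the $\mathbb{Z}$-module generated by $\mathbf{v}_1=1$, $\mathbf{v}_2=\mathbf{i}$, $\mathbf{v}_3=\tfrac12(1+\mathbf{i}+\sqrt2\,\mathbf{j})$, $\mathbf{v}_4=\tfrac12(1+\mathbf{i}+\sqrt2\,\mathbf{k})$. A unit is an element invertible in $H_{1,2,2}$ (equivalently of quaternion norm 1). *)

From mathcomp Require Import all_boot all_order all_algebra.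
Set Implicit Arguments. Unset Strict Implicit. Unset Printing Implicit Defensive.
Import Order.TTheory GRing.Theory Num.Theory.
Local Open Scope ring_scope.

Section Quat.
Variable R : rcfType.

(* a quaternion q0 + q1 i + q2 j + q3 k *)
Record quat := Quat { q0 : R; q1 : R; q2 : R; q3 : R }.

Definition qadd (x y : quat) : quat :=
  Quat (q0 x + q0 y) (q1 x + q1 y) (q2 x + q2 y) (q3 x + q3 y).
Definition qsub (x y : quat) : quat :=
  Quat (q0 x - q0 y) (q1 x - q1 y) (q2 x - q2 y) (q3 x - q3 y).
Definition qscale (r : R) (x : quat) : quat :=
  Quat (r * q0 x) (r * q1 x) (r * q2 x) (r * q3 x).
(* Hamilton product: i^2 = j^2 = k^2 = ijk = -1 *)
Definition qmul (x y : quat) : quat :=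
  Quat (q0 x * q0 y - q1 x * q1 y - q2 x * q2 y - q3 x * q3 y)
       (q0 x * q1 y + q1 x * q0 y + q2 x * q3 y - q3 x * q2 y)
       (q0 x * q2 y - q1 x * q3 y + q2 x * q0 y + q3 x * q1 y)
       (q0 x * q3 y + q1 x * q2 y - q2 x * q1 y + q3 x * q0 y).
Definition qone : quat := Quat 1 0 0 0.

Definition v1 : quat := Quat 1 0 0 0.
Definition v2 : quat := Quat 0 1 0 0.
Definition v3 : quat := Quat (1/2) (1/2) (Num.sqrt 2 / 2) 0.
Definition v4 : quat := Quat (1/2) (1/2) 0 (Num.sqrt 2 / 2).

Definition inH122 (q : quat) : Prop :=
  exists a b c d : int,
    q = qadd (qadd (qscale a%:~R v1) (qscale b%:~R v2))
             (qadd (qscale c%:~R v3) (qscale d%:~R v4)).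

Definition unitH122 (u : quat) : Prop :=
  inH122 u /\ exists v, inH122 v /\ qmul u v = qone /\ qmul v u = qone.

Definition in_mH122 (m : nat) (q : quat) : Prop :=
  exists h, inH122 h /\ q = qscale m%:R h.

End Quat.

(** The reduced norm [N(q) = q q*] is multiplicative and takes non-negative
    integer values on [H_{1,2,2}], so units have norm 1.  By the parallelogram
    law [N(u1 - u2) <= 2 N(u1) + 2 N(u2) = 4], whereas a nonzero element of
    [m H_{1,2,2}] has norm at least [m^2 >= 9]; hence [u1 - u2 = 0].  Oddness
    only serves to exclude [m = 2], where [u - (-u) = 2u] is a counterexample. *)
From mathcomp Require Import all_boot all_order all_algebra.
From mathcomp Require Import ring lra zify.
Import Order.TTheory GRing.Theory Num.Theory.
Local Open Scope ring_scope.
Set Implicit Arguments.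

Section QuatNorm.
Variable R : rcfType.
Implicit Types x y : quat R.

Definition qnorm x : R := q0 x ^+ 2 + q1 x ^+ 2 + q2 x ^+ 2 + q3 x ^+ 2.

Lemma qnorm_ge0 x : 0 <= qnorm x.
Proof. by rewrite /qnorm !addr_ge0 ?sqr_ge0. Qed.

Lemma qnorm_mul x y : qnorm (qmul x y) = qnorm x * qnorm y.
Proof. by case: x => a b c d; case: y => e f g h; rewrite /qnorm /=; ring. Qed.

Lemma qnorm_one : qnorm (qone R) = 1.
Proof. by rewrite /qnorm /=; ring. Qed.

Lemma qnorm_scale (r : R) x : qnorm (qscale r x) = r ^+ 2 * qnorm x.
Proof. by case: x => a b c d; rewrite /qnorm /=; ring. Qed.

Lemma qnorm_parallelogram x y :
  qnorm (qsub x y) + qnorm (qadd x y) = 2 * qnorm x + 2 * qnorm y.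
Proof. by case: x => a b c d; case: y => e f g h; rewrite /qnorm /=; ring. Qed.

Lemma qnorm_sub_eq0 x y : qnorm (qsub x y) = 0 -> x = y.
Proof.
case: x => a b c d; case: y => e f g h; rewrite /qnorm /= => N0.
have s1 := sqr_ge0 (a - e); have s2 := sqr_ge0 (b - f).
have s3 := sqr_ge0 (c - g); have s4 := sqr_ge0 (d - h).
have sub_eq (z w : R) : (z - w) ^+ 2 = 0 -> z = w.
  by move/eqP; rewrite sqrf_eq0 subr_eq0 => /eqP.
by congr Quat; apply: sub_eq; lra.
Qed.

(* The coordinates of a v1 + b v2 + c v3 + d v4 involve sqrt 2 only in the
   [j] and [k] parts, where it is squared away. *)
Lemma qnorm_H122_comb (a b c d : int) :
  qnorm (qadd (qadd (qscale a%:~R (v1 R)) (qscale b%:~R (v2 R)))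
              (qadd (qscale c%:~R (v3 R)) (qscale d%:~R (v4 R))))
  = (a ^+ 2 + b ^+ 2 + c ^+ 2 + d ^+ 2 + (a + b) * (c + d) + c * d)%:~R.
Proof.
have s2 : Num.sqrt (2 : R) ^+ 2 = 2 by rewrite sqr_sqrtr // ler0n.
rewrite /qnorm /=; move: (Num.sqrt 2) s2 => s s2.
rewrite !(intrD, intrM, rmorphXn) /= !(mulr0, mulr1, addr0, add0r).
by rewrite !exprMn s2; field.
Qed.

Lemma qnorm_H122_nat q : inH122 q -> exists n : nat, qnorm q = n%:R.
Proof.
case=> a [b [c [d ->]]]; set p := qadd _ _; have := qnorm_ge0 p.
rewrite /p qnorm_H122_comb; case: (_ + _ * _)%R => n.
  by exists n.
by rewrite ler0z.
Qed.

Lemma qnorm_unitH122 u : unitH122 u -> qnorm u = 1.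
Proof.
case=> Hu [v [Hv [uv1 _]]].
have [n Nu] := qnorm_H122_nat Hu; have [k Nv] := qnorm_H122_nat Hv.
have /eqP : (n * k)%:R = 1 :> R by rewrite natrM -Nu -Nv -qnorm_mul uv1 qnorm_one.
by rewrite pnatr_eq1 muln_eq1 Nu => /andP[/eqP-> _].
Qed.

Lemma qnorm_sub_unitH122 u1 u2 :
  unitH122 u1 -> unitH122 u2 -> qnorm (qsub u1 u2) <= 4.
Proof.
move=> /qnorm_unitH122 N1 /qnorm_unitH122 N2.
have := qnorm_parallelogram u1 u2; have := qnorm_ge0 (qadd u1 u2).
rewrite N1 N2; lra.
Qed.

End QuatNorm.

Theorem lemma33 (R : rcfType) (m : nat) (u1 u2 : quat R) :
  (1 < m)%N -> odd m ->
  unitH122 u1 -> unitH122 u2 ->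
  in_mH122 m (qsub u1 u2) ->
  u1 = u2.
Proof.
move=> m_gt1 m_odd U1 U2 [h [Hh u12_eq]].
have m_ge3 : (3 <= m)%N by move: m_gt1 m_odd; case: m {u12_eq} => [|[|[|]]].
have [n Nh] := qnorm_H122_nat Hh.
have N12 : qnorm (qsub u1 u2) = (m ^ 2 * n)%:R.
  by rewrite u12_eq qnorm_scale Nh natrM natrX.
have := qnorm_sub_unitH122 U1 U2; rewrite N12 (ler_nat R _ 4) => N12_le4.
have n0 : n = 0%N by nia.
by apply: qnorm_sub_eq0; rewrite N12 n0 muln0.
Qed.
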